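(* Let $n\ge 1$ and let $T$ be a tree chosen uniformly at random among all labeled trees on the vertex set $\{1,\dots,n\}$. For a tree with vertex degrees $k_1,\dots,k_n$, let $\langle k^2\rangle=\frac{1}{n}\sum_{i=1}^n k_i^2$ and $E_0[C]=\frac{n}{6}\left(n-1-\langle k^2\rangle\right)$. Then \[ E\big[E_0[C]\big]=\frac{1}{6}(n-1)\left(n-5+\frac{6}{n}\right)=\frac{n^2}{6}-n+\frac{11}{6}-\frac{1}{n}, \] where the outer expectation is over the uniformly random labeled tree $T$.
   Context: For a tree on $n$ vertices, $E_0[C]=\frac{n}{6}(n-1-\langle k^2\rangle)$ is the expected number of pairs of edges that cross when the vertices are placed at positions $1,\dots,n$ by a uniformly random permutation (two edges $\{s,t\}$, $\{u,v\}$ cross iff exactly one of the positions of $s,t$ lies strictly between the positions of $u$ and $v$, the other lying strictly outside that interval). *)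

From HB Require Import structures.
From mathcomp Require Import all_boot all_order all_algebra.
Set Implicit Arguments. Unset Strict Implicit. Unset Printing Implicit Defensive.
Import Order.TTheory GRing.Theory Num.Theory.

(* A simple graph on the vertex set 'I_n (vertices 1..n of the paper are
   0..n-1 here) is a set of edges, each edge a 2-element set of vertices. *)
Definition simple_graph (n : nat) (E : {set {set 'I_n}}) : bool :=
  [forall e in E, #|e| == 2].

Definition adj (n : nat) (E : {set {set 'I_n}}) : rel 'I_n :=
  fun x y => (x != y) && ([set x; y] \in E).

Definition connected (n : nat) (E : {set {set 'I_n}}) : bool :=
  [forall x, forall y, connect (adj E) x y].

(* A cycle: a closed walk x, p_1, ..., p_k, x with k >= 2 and all of
   x, p_1, ..., p_k pairwise distinct.  Since the vertices are distinct,
   k < n, so quantifying over k : 'I_n loses nothing. *)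
Definition has_cycle (n : nat) (E : {set {set 'I_n}}) : bool :=
  [exists x : 'I_n, exists k : 'I_n, exists p : k.-tuple 'I_n,
    [&& 2 <= size p, path (adj E) x p, uniq (x :: p) & adj E (last x p) x]].

Definition is_tree (n : nat) (E : {set {set 'I_n}}) : bool :=
  [&& simple_graph E, connected E & ~~ has_cycle E].

Definition labeled_trees (n : nat) : {set {set {set 'I_n}}} :=
  [set E | is_tree E].

Local Open Scope ring_scope.

Definition degree (n : nat) (E : {set {set 'I_n}}) (i : 'I_n) : nat :=
  #|[set e in E | i \in e]|.

Definition mean_sq_degree (n : nat) (E : {set {set 'I_n}}) : rat :=
  (\sum_(i < n) ((degree E i) ^ 2)%:R) / n%:R.

Definition E0C (n : nat) (E : {set {set 'I_n}}) : rat :=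
  n%:R / 6%:R * (n%:R - 1 - mean_sq_degree E).

Definition expected_E0C (n : nat) : rat :=
  (\sum_(E in labeled_trees n) E0C E) / #|labeled_trees n|%:R.

From mathcomp Require Import all_boot all_order all_algebra.
From mathcomp Require Import zify ring.
Import GRing.Theory Num.Theory.
Set Implicit Arguments. Unset Strict Implicit. Unset Printing Implicit Defensive.

(* For n >= 2, decoding Prüfer sequences is a bijection from the (n-2)-tuples of
   vertices onto the labeled trees on n vertices, under which the degree of a
   vertex is one more than its number of occurrences in the tuple; in particular
   there are n^(n-2) trees.  The sum of (1 + c_i)^2 over all tuples obeys a linear
   recurrence in the tuple length, which gives E[sum_i k_i^2] = (n-1)(5n-6)/n.
   Since E_0[C] is affine in sum_i k_i^2, the formula follows. *)

Lemma set2_injr (T : finType) (l a v : T) : l != a -> [set l; a] = [set l; v] -> a = v.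
Proof.
move=> la e; have: a \in [set l; v] by rewrite -e !inE eqxx orbT.
by rewrite !inE eq_sym (negbTE la) => /eqP.
Qed.

Lemma set2_other (T : finType) (a b x : T) : a != b -> x \in [set a; b] ->
  exists2 u, x != u & [set a; b] = [set x; u].
Proof.
move=> ab; rewrite !inE => /orP[] /eqP->; first by exists b.
by exists a; [rewrite eq_sym | rewrite setUC].
Qed.

Lemma set2_mem (T : finType) (a b x y : T) :
  x \in [set a; b] -> y \in [set a; b] -> x != y -> [set x; y] = [set a; b].
Proof. by rewrite !inE => /orP[] /eqP-> /orP[] /eqP->; rewrite ?eqxx // setUC. Qed.

Lemma card_notin_seq (T : finType) (S : {set T}) (s : seq T) :
  (#|S| <= #|[set i in S | i \notin s]| + size s)%N.
Proof.
rewrite -(cardsID [set i | i \in s] S) addnC.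
have ->: S :\: [set i | i \in s] = [set i in S | i \notin s].
  by apply/setP => i; rewrite !inE andbC.
rewrite leq_add2l; apply: leq_trans (card_size s); apply: subset_leq_card.
by apply/subsetP => i; rewrite !inE => /andP[_].
Qed.

Section TreesOnSubsets.

Variable N : nat.
Implicit Types (S : {set 'I_N}) (E : {set {set 'I_N}}).

Definition edges_within S E :=
  forall e, e \in E -> exists x y, [/\ x != y, x \in S, y \in S & e = [set x; y]].

Definition acyclic E :=
  forall c : seq 'I_N, uniq c -> (2 < size c)%N -> ~~ cycle (adj E) c.

Definition tree_on S E :=
  [/\ edges_within S E, {in S &, forall x y, connect (adj E) x y} & acyclic E].

Lemma adjC E x y : adj E x y = adj E y x.
Proof. by rewrite /adj eq_sym setUC. Qed.

Lemma adj_subset E1 E2 : E1 \subset E2 -> subrel (adj E1) (adj E2).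
Proof. by move=> sE x y /andP[xy xyE]; rewrite /adj xy (subsetP sE _ xyE). Qed.

Lemma adj_within S E x y : edges_within S E -> adj E x y -> (x \in S) && (y \in S).
Proof.
move=> hS /andP[_ /hS [a [b [_ aS bS exy]]]].
have: x \in [set x; y] by rewrite !inE eqxx.
have: y \in [set x; y] by rewrite !inE eqxx orbT.
by rewrite exy !inE => /orP[] /eqP-> /orP[] /eqP->; rewrite ?aS ?bS.
Qed.

Lemma path_within S E x p : edges_within S E -> path (adj E) x p -> all (mem S) p.
Proof.
move=> hS; elim: p x => [|y p IH] x //= /andP[xy pp].
by rewrite (IH _ pp) andbT; case/andP: (adj_within hS xy).
Qed.

Lemma edge_notin_within S E l v : edges_within S E -> l \notin S -> [set l; v] \notin E.
Proof.
move=> hS lS; apply/negP => /hS [x [y [_ xS yS e]]].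
have: l \in [set x; y] by rewrite -e !inE eqxx.
by rewrite !inE => /orP[] /eqP h; move: lS; rewrite h ?xS ?yS.
Qed.

Lemma degree_setU1 E f i : f \notin E -> degree (f |: E) i = (degree E i + (i \in f))%N.
Proof.
move=> fE; rewrite /degree; case: (boolP (i \in f)) => fi.
  have ->: [set e in f |: E | i \in e] = f |: [set e in E | i \in e].
    by apply/setP => e; rewrite !inE; case: (e =P f) => [->|_]; rewrite ?fi ?orbT ?orbF.
  by rewrite cardsU1 inE (negbTE fE) addnC.
have ->: [set e in f |: E | i \in e] = [set e in E | i \in e].
  by apply/setP => e; rewrite !inE; case: (e =P f) => [->|_]; rewrite ?(negbTE fi) ?andbF.
by rewrite addn0.
Qed.

Lemma degree_notin S E i : edges_within S E -> i \notin S -> degree E i = 0%N.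
Proof.
move=> hS iS; apply/eqP; rewrite cards_eq0; apply/eqP/setP => e; rewrite !inE.
apply/negbTE/negP => /andP[/hS [a [b [_ aS bS ->]]]].
by rewrite !inE => /orP[] /eqP ei; move: iS; rewrite ei ?aS ?bS.
Qed.

Lemma degree1_edge_uniq E l e1 e2 : degree E l = 1%N ->
  e1 \in E -> l \in e1 -> e2 \in E -> l \in e2 -> e1 = e2.
Proof.
rewrite /degree => /eqP/cards1P [e0 El] e1E le1 e2E le2.
have: e1 \in [set e in E | l \in e] by rewrite inE e1E le1.
have: e2 \in [set e in E | l \in e] by rewrite inE e2E le2.
by rewrite El !inE => /eqP-> /eqP->.
Qed.

Lemma negb_has_cycle E : ~~ has_cycle E <-> acyclic E.
Proof.
split=> [hE [|x p] // u sz | hE].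
  apply/negP => cy; move/negP: hE; apply.
  have hk : (size p < N)%N.
    by have := max_card (mem (x :: p)); rewrite card_ord (card_uniqP u).
  apply/existsP; exists x; apply/existsP; exists (Ordinal hk); apply/existsP.
  exists (in_tuple p); move: cy; rewrite /= rcons_path => /andP[h1 h2].
  by apply/and4P; split.
apply/negP => /existsP [x /existsP [k /existsP [p /and4P [h1 h2 h3 h4]]]].
by move: (hE (x :: tval p) h3); rewrite /= ltnS h1 rcons_path h2 h4 => /(_ isT).
Qed.

Lemma is_treeE E : is_tree E <-> tree_on setT E.
Proof.
rewrite /is_tree /tree_on; split.
  move=> /and3P [hs hc /negb_has_cycle hy]; split=> //.
  - move=> e eE; move/forallP: hs => /(_ e); rewrite eE /= => /cards2P [x [y [xy ->]]].
    by exists x, y; rewrite !inE.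
  - by move=> x y _ _; move/forallP: hc => /(_ x) /forallP /(_ y).
move=> [hs hc hy]; apply/and3P; split; last exact/negb_has_cycle.
- apply/forallP => e; apply/implyP => /hs [x [y [xy _ _ ->]]].
  by apply/cards2P; exists x, y.
- by apply/forallP => x; apply/forallP => y; apply: hc; rewrite inE.
Qed.

Lemma acyclic_small S E : edges_within S E -> (#|S| <= 2)%N -> acyclic E.
Proof.
move=> hS cS [|z q] // u sz; apply/negP => /= cy.
have := path_within hS cy; rewrite all_rcons => /andP[zS qS].
have: (size (z :: q) <= #|S|)%N.
  rewrite -(card_uniqP u); apply: subset_leq_card; apply/subsetP => w.
  by rewrite inE => /orP[/eqP->//|]; apply: (allP qS).
by move: sz cS; lia.
Qed.

Lemma tree_on_edge a b : a != b -> tree_on [set a; b] [set [set a; b]].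
Proof.
move=> ab; have hS : edges_within [set a; b] [set [set a; b]].
  by move=> e; rewrite inE => /eqP->; exists a, b; rewrite !inE !eqxx orbT.
split=> //; last by apply: (acyclic_small hS); rewrite cards2 ab.
move=> x y hx hy; case: (eqVneq x y) => [->|xy]; first exact: connect0.
by apply: connect1; rewrite /adj xy inE (set2_mem hx hy xy) eqxx.
Qed.

Lemma degree1_adj E l v z : degree E l = 1%N -> [set l; v] \in E -> adj E l z -> z = v.
Proof.
move=> dl lvE /andP[lz lzE]; apply: (set2_injr lz).
by apply: (degree1_edge_uniq dl lzE _ lvE); rewrite !inE eqxx.
Qed.

Lemma pendant_notin_path E l v x p : (forall z, adj E l z -> z = v) ->
  path (adj E) x p -> uniq (x :: p) -> l \in p -> l = last x p.
Proof.
move=> nbr pp u lp; case/splitPr: lp pp u => p1 [|b q] pp u; first by rewrite last_cat.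
move: pp; rewrite cat_path => /andP[_] /= /and3P[al /nbr lb _].
move: u; rewrite -cat_cons cat_uniq => /and3P[_ /hasPn nq _].
move: al; rewrite adjC => /nbr al.
by move: (nq b); rewrite !inE eqxx orbT lb -al -in_cons mem_last => /(_ isT).
Qed.

Lemma pendant_notin_cycle E l v c : (forall z, adj E l z -> z = v) ->
  uniq c -> (2 < size c)%N -> cycle (adj E) c -> l \notin c.
Proof.
move=> nbr u sz cy; apply/negP => lc; case/splitPr: lc u sz cy => p1 p2.
rewrite -(rot_uniq (size p1)) -(rot_cycle (size p1)) rot_size_cat cat_cons size_cat /=.
rewrite addnS ltnS addnC -size_cat.
case: (p2 ++ p1) => [|a [|b q]] // + _ => /and4P[_ aq _ _] /= /and3P[/nbr av _].
rewrite rcons_path => /andP[_]; rewrite adjC => /nbr lv.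
by move: aq; rewrite av -lv mem_last.
Qed.

Lemma tree_on_add_leaf S E l v : l \in S -> v \in S -> v != l ->
  tree_on (S :\ l) E -> tree_on S ([set l; v] |: E).
Proof.
move=> lS vS vl [hS hc hy]; set E' := _ |: E.
have EE' : subrel (adj E) (adj E') by apply/adj_subset/subsetUr.
have lv : adj E' l v by rewrite /adj eq_sym vl setU11.
have vS' : v \in S :\ l by rewrite !inE vl vS.
have nbr z : adj E' l z -> z = v.
  case/andP=> lz; rewrite in_setU1 => /orP[/eqP /(set2_injr lz) //| lzE].
  by have /(adj_within hS) := introT andP (conj lz lzE); rewrite !inE eqxx.
split.
- move=> e; rewrite in_setU1 => /orP[/eqP->|/hS [x [y [xy xS yS ->]]]].
    by exists l, v; rewrite lS vS eq_sym vl.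
  by exists x, y; move: xS yS; rewrite !inE => /andP[_ ->] /andP[_ ->].
- have conn' : {in S :\ l &, forall x y, connect (adj E') x y}.
    by move=> x y xS yS; apply: connect_sub (hc x y xS yS) => a b /EE'; apply: connect1.
  move=> x y xS yS; case: (eqVneq x l) => [->|xl]; case: (eqVneq y l) => [->|yl] //.
  + by apply: connect_trans (connect1 lv) (conn' _ _ vS' _); rewrite !inE yl.
  + by apply: connect_trans (conn' _ _ _ vS') (connect1 _); rewrite 1?adjC // !inE xl.
  + by apply: conn'; rewrite !inE ?xl ?yl.
- move=> c u sz; apply/negP => cy; have lc := pendant_notin_cycle nbr u sz cy.
  suff: cycle (adj E) c by apply/negP/hy.
  apply: (@sub_in_cycle _ [pred z | z != l] (adj E')) cy; last first.
    by apply/allP => z zc /=; apply: contraNneq lc => <-.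
  move=> x y /= xl yl /andP[xy]; rewrite in_setU1 => /orP[/eqP e|h]; last by rewrite /adj xy h.
  have: l \in [set x; y] by rewrite e !inE eqxx.
  by rewrite !inE => /orP[] /eqP el; [move: xl | move: yl]; rewrite -el inE eqxx.
Qed.

Lemma tree_on_del_leaf S E l v : tree_on S E -> degree E l = 1%N ->
  [set l; v] \in E -> l != v -> tree_on (S :\ l) (E :\ [set l; v]).
Proof.
move=> [hS hc hy] dl lvE lv; set f := [set l; v].
have lf : l \in f by rewrite !inE eqxx.
have nbr := degree1_adj dl lvE.
have notf x y : x != l -> y != l -> [set x; y] != f.
  move=> xl yl; apply: contraNneq xl => e; move: lf; rewrite -e !inE.
  by case/orP => /eqP el //; move: yl; rewrite el eqxx.
split.
- move=> e; rewrite !inE => /andP[ef eE]; have [x [y [xy xS yS ee]]] := hS e eE.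
  have nl z : z \in e -> z != l.
    by move=> ze; apply: contraNneq ef => zl; rewrite (degree1_edge_uniq dl eE _ lvE lf) // -zl.
  exists x, y; rewrite !inE xS yS xy ee; split => //; rewrite ?andbT; apply: nl.
    by rewrite ee !inE eqxx.
  by rewrite ee !inE eqxx orbT.
- move=> x y; rewrite !inE => /andP[xl xS] /andP[yl yS].
  case/connectP: (hc x y xS yS) => p pp ey; rewrite ey in yl *.
  case: (shortenP pp) yl => p' pp' u' _ yl.
  have lp' : l \notin p'.
    by apply: contra yl => /(pendant_notin_path nbr pp' u') <-.
  apply/connectP; exists p' => //.
  apply: (@sub_in_path _ [pred z | z != l] (adj E)) pp'; last first.
    by apply/allP => z; rewrite inE => /orP[/eqP->|zp] //=; apply: contraNneq lp' => <-.
  by move=> a b al bl /andP[ab h]; rewrite /adj ab !inE h andbT notf.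
- by move=> c u sz; apply: (contra _ (hy c u sz)); apply/sub_cycle/adj_subset/subsetDl.
Qed.

Lemma tree_on_extend_path S E x h r : tree_on S E ->
  path (adj E) x (h :: r) -> uniq (x :: h :: r) ->
  degree E x = 1%N \/ exists2 u, path (adj E) u (x :: h :: r) & uniq (u :: x :: h :: r).
Proof.
move=> [hS _ hy] pp uu; case: (eqVneq (degree E x) 1%N) => dx; [by left | right].
have xh : adj E x h by case/andP: pp.
set A := [set e in E | x \in e].
have xhA : [set x; h] \in A by rewrite inE; case/andP: xh => _ ->; rewrite !inE eqxx.
have : (0 < #|A :\ [set x; h]|)%N.
  by move: dx; rewrite /degree -/A (cardsD1 [set x; h] A) xhA add1n eqSS lt0n.
case/card_gt0P => e; rewrite !inE => /andP[ne /andP[eE xe]].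
have [a [b [ab _ _ ee]]] := hS e eE; rewrite ee in ne eE xe.
have [w xw ew] := set2_other ab xe; rewrite ew in ne eE.
have xw' : adj E x w by rewrite /adj xw eE.
have wh : w != h by apply: contraNneq ne => ->.
case: (boolP (w \in x :: h :: r)) => wp.
  exfalso; move: wp; rewrite !inE (negbTE wh) eq_sym (negbTE xw) /= => wr.
  case/splitPr: wr pp uu => r1 r2 pp uu.
  have /negP[] : ~~ cycle (adj E) (x :: h :: rcons r1 w).
    apply: hy; last by rewrite /= size_rcons.
    by move: uu; rewrite -cat_rcons -!cat_cons cat_uniq => /andP[].
  rewrite /= rcons_path last_rcons [adj E w x]adjC xw' !andbT xh /=.
  by move: pp; rewrite -cat_rcons -cat_cons cat_path => /andP[] /andP[].
by exists w; [rewrite /= adjC xw' | rewrite cons_uniq wp].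
Qed.

Lemma tree_on_leaf S E : tree_on S E -> (1 < #|S|)%N -> exists2 l, l \in S & degree E l = 1%N.
Proof.
move=> ht cS; have [hS hc _] := ht.
have [a aS] : exists a, a \in S by apply/set0Pn; rewrite -card_gt0 ltnW.
have [b] : exists b, b \in S :\ a by apply/set0Pn; move: cS; rewrite -card_gt0 (cardsD1 a S) aS.
rewrite !inE => /andP[ba bS].
case/connectP: (hc a b aS bS) ba => p pp ->; case: (shortenP pp) => p' pr ur _.
case: p' pr ur => [|h r] pr ur; [by rewrite /= eqxx | move=> _].
(* A simple path that cannot be extended backwards starts at a leaf; [d] is fuel. *)
suff: forall d x h r, path (adj E) x (h :: r) -> uniq (x :: h :: r) ->
    (N <= size r + d)%N -> exists2 l, l \in S & degree E l = 1%N.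
  by move=> /(_ N a h r pr ur); apply; rewrite leq_addl.
clear -ht hS; elim=> [|d IH] x h r xp uu.
  have := max_card (mem (x :: h :: r)); rewrite card_ord (card_uniqP uu) /=; lia.
move=> sr; case: (tree_on_extend_path ht xp uu) => [dx|[w pw uw]].
  by exists x => //; case/andP: xp => /(adj_within hS) /andP[].
by apply: (IH w x (h :: r) pw uw); rewrite /=; lia.
Qed.

Lemma tree_on_card2 S E : #|S| = 2 -> tree_on S E -> E = [set S].
Proof.
move=> /eqP/cards2P [a [b [ab eS]]] [hS hc _].
have edgeS e : e \in E -> e = S.
  by move=> /hS [x [y [xy xS yS ->]]]; rewrite eS in xS yS *; apply: set2_mem.
have [aS bS] : a \in S /\ b \in S by rewrite eS !inE !eqxx orbT.
case/connectP: (hc a b aS bS) => [[|h p]] pp ep; first by rewrite ep eqxx in ab.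
case/andP: pp => /andP[_ hE] _.
by apply/setP => e; rewrite inE; apply/idP/eqP => [/edgeS //|->]; rewrite -(edgeS _ hE).
Qed.

Lemma degree1_edge S E l : edges_within S E -> degree E l = 1%N ->
  exists2 v, l != v & [set l; v] \in E.
Proof.
move=> hS dl; have [e] : exists e, e \in [set e in E | l \in e].
  by apply/card_gt0P; rewrite -/(degree E l) dl.
rewrite inE => /andP[eE le]; have [a [b [ab _ _ ee]]] := hS e eE.
rewrite ee in eE le; have [v lv ev] := set2_other ab le.
by exists v; rewrite -?ev.
Qed.

End TreesOnSubsets.

Section PruferCode.

Variable N : nat.
Implicit Types (S : {set 'I_N}) (T : {set {set 'I_N}}) (s : seq 'I_N).

(* The leaf [l] joined to the head [v] of [s] is any vertex of [S] not occurring
   in [s], not necessarily the least one as in Prüfer's code.  The [set0] branch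
   is junk, unreachable when [#|S| = (size s).+2]. *)
Fixpoint prufer_decode S s : {set {set 'I_N}} :=
  if s is v :: s' then
    if [pick l in [set i in S | i \notin s]] is Some l
    then [set l; v] |: prufer_decode (S :\ l) s' else set0
  else [set S].

Lemma prufer_leaf S v s : #|S| = (size s).+3 -> all (mem S) (v :: s) ->
  exists l, [/\ [pick x in [set i in S | i \notin v :: s]] = Some l,
    l \in S, l \notin v :: s, #|S :\ l| = (size s).+2 & all (mem (S :\ l)) s].
Proof.
move=> cS /andP[vS sS]; case: pickP => [l|none]; last first.
  by have := card_notin_seq S (v :: s); rewrite cS (eq_card0 none) /= => ?; exfalso; lia.
rewrite !inE => /andP[lS ls]; exists l; split => //.
  by move: cS; rewrite (cardsD1 l S) lS add1n => -[].
apply/allP => w ws; have := allP sS w ws; rewrite !inE => ->; rewrite andbT.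
by apply: contraNneq ls => <-; rewrite ws orbT.
Qed.

Lemma prufer_decode_tree S s : #|S| = (size s).+2 -> all (mem S) s ->
  tree_on S (prufer_decode S s).
Proof.
elim: s S => [|v s IH] S cS sS.
  have /cards2P [a [b [ab ->]]] : #|S| == 2 by rewrite cS.
  exact: tree_on_edge.
have [l [pl lS lvs cS' sS']] := prufer_leaf cS sS.
rewrite /= pl; apply: tree_on_add_leaf (IH _ cS' sS') => //.
  by case/andP: sS.
by apply: contraNneq lvs => <-; rewrite inE eqxx.
Qed.

Lemma prufer_decode_degree S s i : #|S| = (size s).+2 -> all (mem S) s -> i \in S ->
  degree (prufer_decode S s) i = (count_mem i s).+1.
Proof.
elim: s S => [|v s IH] S cS sS iS.
  rewrite /degree (_ : [set e in [set S] | i \in e] = [set S]) ?cards1 //.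
  by apply/setP => e; rewrite !inE; case: (e =P S) => [->|]; rewrite ?iS.
have [l [pl lS lvs cS' sS']] := prufer_leaf cS sS.
have [hS _ _] := prufer_decode_tree cS' sS'.
have lS' : l \notin S :\ l by rewrite !inE eqxx.
move: lvs; rewrite inE negb_or => /andP[lv ls].
rewrite /= pl degree_setU1 ?(edge_notin_within v hS lS') //.
case: (eqVneq i l) => [->|il].
  rewrite (degree_notin hS lS') !inE eqxx [v == l]eq_sym (negbTE lv).
  by move/count_memPn: ls => ->.
rewrite IH ?inE ?il // (negbTE il) [v == i]eq_sym.
by case: (i == v); rewrite /= ?addn0 ?addn1.
Qed.

Lemma prufer_decode_inj S s1 s2 : #|S| = (size s1).+2 -> size s1 = size s2 ->
  all (mem S) s1 -> all (mem S) s2 -> prufer_decode S s1 = prufer_decode S s2 -> s1 = s2.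
Proof.
elim: s1 s2 S => [|v1 s1 IH] [|v2 s2] S // cS [sz] a1 a2 e.
have cS2 : #|S| = (size (v2 :: s2)).+2 by rewrite cS /= sz.
have notin_eq i : i \in S -> (i \notin v1 :: s1) = (i \notin v2 :: s2).
  move=> iS; have := prufer_decode_degree cS2 a2 iS.
  rewrite -e (prufer_decode_degree cS a1 iS) => -[c12].
  by rewrite -!has_pred1 !has_count /= c12.
have [l [p1 lS l1 cS' s1S]] := prufer_leaf cS a1.
have [l' [p2 _ _ _ s2S]] := prufer_leaf cS2 a2.
have eL : [set i in S | i \notin v1 :: s1] = [set i in S | i \notin v2 :: s2].
  by apply/setP => i; rewrite !inE; case: (boolP (i \in S)) => //= /notin_eq.
move: p2; rewrite -eL p1 => -[ll']; subst l'.
have dl : degree (prufer_decode S (v1 :: s1)) l = 1%N.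
  by rewrite (prufer_decode_degree cS a1 lS); move/count_memPn: l1 => ->.
move: e dl; rewrite /= p1 -eL p1 => e dl.
have [hS1 _ _] := prufer_decode_tree cS' s1S.
have [hS2 _ _] : tree_on (S :\ l) (prufer_decode (S :\ l) s2).
  by apply: prufer_decode_tree s2S; rewrite cS' sz.
have lS' : l \notin S :\ l by rewrite !inE eqxx.
move: l1; rewrite inE negb_or => /andP[lv1 _].
have v12 : v1 = v2.
  apply: (set2_injr lv1); apply: (degree1_edge_uniq dl); rewrite ?setU11 ?inE ?eqxx //.
  by rewrite -in_setU1 e setU11.
subst v2; congr (_ :: _); apply: IH cS' sz s1S s2S _.
by rewrite -(setU1K (edge_notin_within v1 hS1 lS')) -(setU1K (edge_notin_within v1 hS2 lS')) e.
Qed.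

Lemma prufer_decode_onto m S T : #|S| = m.+2 -> tree_on S T ->
  exists s, [/\ size s = m, all (mem S) s & T = prufer_decode S s].
Proof.
elim: m S T => [|m IH] S T cS ht; first by exists [::]; rewrite (tree_on_card2 cS ht).
have [hS _ _] := ht; set L := [set i in S | degree T i == 1%N].
have [l pl] : exists l, [pick x in L] = Some l.
  case: pickP => [l _|none]; first by exists l.
  have [l0 l0S dl0] : exists2 l, l \in S & degree T l = 1%N by apply: tree_on_leaf; rewrite ?cS.
  by have := none l0; rewrite !inE l0S dl0 eqxx.
have /setIdP[lS /eqP dl] : l \in L by move: pl; case: pickP => // x xL [<-].
have [v lv lvT] := degree1_edge hS dl.
have vS : v \in S by have /(adj_within hS)/andP[] : adj T l v by rewrite /adj lv lvT.
have cS' : #|S :\ l| = m.+2 by move: cS; rewrite (cardsD1 l S) lS add1n => -[].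
have [s [sz sS eT']] := IH _ _ cS' (tree_on_del_leaf ht dl lvT lv).
have lS' : l \notin S :\ l by rewrite !inE eqxx.
have leavesE : [set i in S | i \notin v :: s] = L.
  apply/setP => i; rewrite !inE; case: (boolP (i \in S)) => //= iS.
  case: (eqVneq i l) => [->|il].
    by rewrite dl eqxx (negbTE lv) /=; apply: contra lS'; apply: (allP sS).
  rewrite -(setD1K lvT) degree_setU1 ?setD11 // eT' prufer_decode_degree ?inE ?il ?sz //.
  rewrite (negbTE il) /= addSn eqSS addn_eq0 eqb0 negb_or andbC; congr (_ && _).
  by apply/idP/eqP => /count_memPn.
exists (v :: s); split; rewrite /= ?sz ?vS //.
- by apply/allP => w /(allP sS); rewrite !inE => /andP[].
- by rewrite leavesE pl -eT' setD1K.
Qed.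

End PruferCode.

Lemma big_tuple_cons (R : Type) (idx : R) (op : Monoid.com_law idx) (T : finType) k
    (F : k.+1.-tuple T -> R) :
  \big[op/idx]_(t : k.+1.-tuple T) F t =
  \big[op/idx]_(x : T) \big[op/idx]_(t : k.-tuple T) F [tuple of x :: t].
Proof.
rewrite pair_big (reindex (fun p : T * k.-tuple T => [tuple of p.1 :: p.2])) //=.
exists (fun t => (thead t, behead_tuple t)) => [[x t]|t] _ /=.
  by congr pair; apply: val_inj.
by rewrite [t in RHS]tuple_eta.
Qed.

Lemma sum_count_mem (T : finType) (s : seq T) : (\sum_(i : T) count_mem i s)%N = size s.
Proof.
elim: s => [|a s IH] /=; first by rewrite big1.
rewrite big_split /= IH (bigD1 a) //= eqxx big1 ?add1n // => i /negbTE.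
by rewrite eq_sym => ->.
Qed.

Section SquaredCounts.

Variable T : finType.

Definition sum_sq_count (s : seq T) := (\sum_(i : T) (count_mem i s).+1 ^ 2)%N.

Lemma sum_sq_count_cons x s :
  sum_sq_count (x :: s) = (sum_sq_count s + 2 * count_mem x s + 3)%N.
Proof.
rewrite /sum_sq_count /= (bigD1 x) //= [in RHS](bigD1 x) //= eqxx.
rewrite (eq_bigr (fun i => (count_mem i s).+1 ^ 2)) => [|i /negbTE]; last first.
  by rewrite eq_sym => ->.
by set A := bigop _ _ _; rewrite add1n; lia.
Qed.

Lemma sum_sq_count_tupleS k :
  (\sum_(t : k.+1.-tuple T) sum_sq_count t =
   #|T| * \sum_(t : k.-tuple T) sum_sq_count t + (2 * k + 3 * #|T|) * #|T| ^ k)%N.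
Proof.
rewrite big_tuple_cons /=.
under eq_bigr do under eq_bigr do rewrite sum_sq_count_cons.
under eq_bigr do rewrite 2!big_split /= -big_distrr /=.
rewrite 2!big_split /= -big_distrr /=.
have -> : (\sum_(x : T) \sum_(t : k.-tuple T) count_mem x t = k * #|T| ^ k)%N.
  rewrite exchange_big (eq_bigr (fun _ => k)) => [|t _]; last by rewrite sum_count_mem size_tuple.
  by rewrite sum_nat_const card_tuple mulnC.
by rewrite !sum_nat_const !card_tuple -/#|T|; lia.
Qed.

Lemma sum_sq_count_tuple k :
  (#|T| * \sum_(t : k.-tuple T) sum_sq_count t =
   #|T| ^ k * (#|T| * (#|T| + 3 * k) + k * (k - 1)))%N.
Proof.
elim: k => [|k IH].
  rewrite (eq_bigr (fun _ => #|T|)) => [|t _]; last first.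
    by rewrite tuple0 /sum_sq_count (eq_bigr (fun _ => 1%N)) // sum1_card.
  by rewrite sum_nat_const card_tuple expn0; lia.
rewrite sum_sq_count_tupleS mulnDr IH expnS.
case: k {IH} => [|k]; rewrite ?subn1 /=; nia.
Qed.

End SquaredCounts.

Section PruferBijection.

Variable k : nat.
Local Notation n := k.+2.

Definition prufer_tree (t : k.-tuple 'I_n) := prufer_decode [set: 'I_n] t.

Let card_setT (t : k.-tuple 'I_n) : #|[set: 'I_n]| = (size t).+2.
Proof. by rewrite cardsT card_ord size_tuple. Qed.

Let all_setT (s : seq 'I_n) : all (mem [set: 'I_n]) s.
Proof. by apply/allP => x _; rewrite inE. Qed.

Lemma labeled_treesE : labeled_trees n = [set prufer_tree t | t : k.-tuple 'I_n].
Proof.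
apply/setP => E; rewrite inE; apply/idP/imsetP => [/is_treeE ht|[t _ ->]].
  have [s [sz _ ->]] := prufer_decode_onto (etrans (cardsT _) (card_ord n)) ht.
  by exists (Tuple (introT eqP sz)).
by apply/is_treeE/prufer_decode_tree; rewrite ?card_setT ?all_setT.
Qed.

Lemma prufer_tree_inj : injective prufer_tree.
Proof.
move=> t1 t2 /prufer_decode_inj e; apply: val_inj; apply: e; rewrite ?card_setT ?all_setT //.
by rewrite !size_tuple.
Qed.

Lemma degree_prufer_tree t i : degree (prufer_tree t) i = (count_mem i t).+1.
Proof. by rewrite prufer_decode_degree ?card_setT ?all_setT ?inE. Qed.

Lemma card_labeled_trees_prufer : #|labeled_trees n| = (n ^ k)%N.
Proof.
by rewrite labeled_treesE card_imset; [rewrite card_tuple card_ord | apply: prufer_tree_inj].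
Qed.

Lemma sum_sq_degree_labeled_trees :
  (n * \sum_(E in labeled_trees n) \sum_(i < n) degree E i ^ 2 = n ^ k * (k.+1 * (5 * k + 4)))%N.
Proof.
rewrite labeled_treesE big_imset /=; last by move=> ? ? _ _; apply: prufer_tree_inj.
under eq_bigr do under eq_bigr do rewrite degree_prufer_tree.
have := sum_sq_count_tuple 'I_n k; rewrite /sum_sq_count card_ord => ->.
by congr (_ * _)%N; case: k => [|k']; rewrite ?subn1 /=; nia.
Qed.

End PruferBijection.

Lemma labeled_trees1 : labeled_trees 1 = [set set0].
Proof.
apply/setP => E; rewrite !inE; apply/idP/eqP => [/and3P[hS _ _]|->].
  apply/setP => e; rewrite inE; apply/negbTE/negP => eE.
  move/forallP: hS => /(_ e); rewrite eE /= => /eqP e2.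
  by have := max_card (mem e); rewrite card_ord e2.
apply/is_treeE; have hS : edges_within [set: 'I_1] set0 by move=> e; rewrite inE.
split=> //; last by apply: (acyclic_small hS); rewrite cardsT card_ord.
by move=> x y _ _; rewrite (ord1 x) (ord1 y) connect0.
Qed.

Lemma card_labeled_trees n : (0 < n)%N -> #|labeled_trees n| = (n ^ (n - 2))%N.
Proof.
case: n => [|[|k]] // _; first by rewrite labeled_trees1 cards1.
by rewrite card_labeled_trees_prufer subn2.
Qed.

Local Open Scope ring_scope.

Lemma expected_sum_sq_degree n : (0 < n)%N ->
  (\sum_(E in labeled_trees n) \sum_(i < n) ((degree E i) ^ 2)%:R) / #|labeled_trees n|%:R
  = (n%:R - 1) * (5%:R * n%:R - 6%:R) / n%:R :> rat.
Proof.
case: n => [|[|k]] // _.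
  rewrite labeled_trees1 big_set1 big1 ?mul0r ?subrr ?mul0r // => i _.
  by rewrite /degree (_ : [set e in set0 | _] = set0) ?cards0 //; apply/setP => e; rewrite !inE.
have n0 : k.+2%:R != 0 :> rat by rewrite pnatr_eq0.
have P0 : (k.+2 ^ k)%:R != 0 :> rat by rewrite pnatr_eq0 expn_eq0.
have := congr1 (fun m => m%:R : rat) (sum_sq_degree_labeled_trees k).
rewrite card_labeled_trees_prufer !natrM !natr_sum /=.
under eq_bigr do rewrite natr_sum.
set D := \sum_(E in _) _ => hD.
have -> : D = (k.+2 ^ k)%:R * (k.+1%:R * (5 * k + 4)%:R) / k.+2%:R.
  by rewrite -hD mulrC mulKf.
move: n0; set P := (k.+2 ^ k)%:R; rewrite -[k.+2]addn2 -[k.+1]addn1 !natrD => n0.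
by field; rewrite n0 P0.
Qed.

Lemma E0C_sum_sq_degree n (E : {set {set 'I_n}}) : (0 < n)%N ->
  E0C E = n%:R * (n%:R - 1) / 6%:R - (\sum_(i < n) ((degree E i) ^ 2)%:R) / 6%:R.
Proof.
by move=> n_gt0; rewrite /E0C /mean_sq_degree; field; rewrite pnatr_eq0 -lt0n.
Qed.

Theorem proposition1 (n : nat) (hn : (1 <= n)%N) :
  expected_E0C n = 6%:R^-1 * (n%:R - 1) * (n%:R - 5%:R + 6%:R / n%:R) /\
  expected_E0C n = n%:R ^+ 2 / 6%:R - n%:R + 11%:R / 6%:R - n%:R^-1.
Proof.
have n0 : n%:R != 0 :> rat by rewrite pnatr_eq0 -lt0n.
have T0 : #|labeled_trees n|%:R != 0 :> rat.
  by rewrite pnatr_eq0 card_labeled_trees // expn_eq0 eqn0Ngt hn.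
have -> : expected_E0C n =
    n%:R * (n%:R - 1) / 6%:R - (n%:R - 1) * (5%:R * n%:R - 6%:R) / n%:R / 6%:R.
  rewrite /expected_E0C (eq_bigr _ (fun E _ => E0C_sum_sq_degree E hn)).
  by rewrite sumrB sumr_const -mulr_suml -expected_sum_sq_degree //; field.
by split; field.
Qed.
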